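(* Let $\operatorname{Cs}(4)=\{x,y,z\}$ be the quandle with multiplication $xx=x$, $yy=y$, $zz=z$, $xy=x$, $xz=y$, $yx=y$, $yz=x$, $zx=z$, $zy=z$. Then $\operatorname{Aut}(\mathbb{Z}[\operatorname{Cs}(4)])\cong\mathbb{Z}_2$.
   Context: For a quandle $Q$, the quandle ring $\mathbb{Z}[Q]$ is the free abelian group with basis $Q$, with multiplication $\big(\sum_i\alpha_i q_i\big)\big(\sum_j\beta_j q_j\big)=\sum_{i,j}\alpha_i\beta_j (q_iq_j)$. $\operatorname{Aut}(\mathbb{Z}[Q])$ denotes the group of ring automorphisms of $\mathbb{Z}[Q]$ (bijective additive maps preserving the multiplication). *)

From HB Require Import structures.
From mathcomp Require Import all_boot all_order all_algebra.
Set Implicit Arguments. Unset Strict Implicit. Unset Printing Implicit Defensive.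
Import GRing.Theory.
Local Open Scope ring_scope.

(* The quandle Cs(4) = {x, y, z}, encoded as 'I_3 with x = 0, y = 1, z = 2. *)
Definition cs4_nat (a b : nat) : nat :=
  match a, b with
  | 0, 2 => 1%N
  | 1, 2 => 0%N
  | _, _ => a
  end.

Definition Cs4 := 'I_3.
Definition cs4_mul (i j : Cs4) : Cs4 := inord (cs4_nat i j).

(* The quandle ring Z[Cs(4)]: the free abelian group with basis Cs(4),
   represented by coefficient functions Cs4 -> int. *)
Definition ZQ := {ffun Cs4 -> int}.

(* (sum_i a_i q_i)(sum_j b_j q_j) = sum_{i,j} a_i b_j (q_i q_j) *)
Definition ZQ_mul (u v : ZQ) : ZQ :=
  [ffun q => \sum_(i : Cs4) \sum_(j : Cs4 | cs4_mul i j == q) u i * v j].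

Definition is_ring_aut (f : ZQ -> ZQ) : Prop :=
  [/\ forall u v : ZQ, f (u + v) = f u + f v,
      bijective f &
      forall u v : ZQ, f (ZQ_mul u v) = ZQ_mul (f u) (f v)].

From HB Require Import structures.
From mathcomp Require Import all_boot all_algebra all_fingroup ring zify.
Set Implicit Arguments. Unset Strict Implicit. Unset Printing Implicit Defensive.
Import GRing.Theory.
Local Open Scope ring_scope.

(* Both x and y are right identities of Z[Cs(4)], and the right identities are
   exactly the e = p x + (1 - p) y; hence an automorphism f sends x and y to
   such elements, f x = p x + (1 - p) y and f y = q x + (1 - q) y.  Writing
   r = f z, the relations z z = z, x z = y and y z = x, together with p <> q
   (injectivity) and r_z <> 0 (surjectivity), force r = z and q = 1 - p.
   Surjectivity onto x then makes 2p - 1 a unit, so p is 0 or 1: f is the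
   identity or the linear extension of the quandle automorphism x <-> y. *)

Definition qx : Cs4 := @Ordinal 3 0 isT.
Definition qy : Cs4 := @Ordinal 3 1 isT.
Definition qz : Cs4 := @Ordinal 3 2 isT.

Lemma Cs4P (k : Cs4) : [\/ k = qx, k = qy | k = qz].
Proof.
by case: k => [[|[|[|//]]] ?]; [constructor 1 | constructor 2 | constructor 3];
  apply: val_inj.
Qed.

Lemma inord_Cs4 : (inord 0 = qx) * (inord 1 = qy) * (inord 2 = qz).
Proof. by do ![split]; apply: val_inj; rewrite /= inordK. Qed.

Lemma cs4_mul_z :
  [/\ cs4_mul qx qz = qy, cs4_mul qy qz = qx & cs4_mul qz qz = qz].
Proof. by rewrite /cs4_mul /= !inord_Cs4. Qed.

Lemma sum_Cs4 (F : Cs4 -> int) : \sum_(k : Cs4) F k = F qx + F qy + F qz.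
Proof.
rewrite !big_ord_recl big_ord0 addr0 addrA.
by congr (F _ + F _ + F _); apply: val_inj.
Qed.

Lemma ZQ_eq (u v : ZQ) : u qx = v qx -> u qy = v qy -> u qz = v qz -> u = v.
Proof. by move=> ex ey ez; apply/ffunP => k; case: (Cs4P k) => ->. Qed.

Lemma ZQ_mulE (u v : ZQ) :
  (ZQ_mul u v qx = u qx * (v qx + v qy) + u qy * v qz)
  * (ZQ_mul u v qy = u qy * (v qx + v qy) + u qx * v qz)
  * (ZQ_mul u v qz = u qz * (v qx + v qy + v qz)).
Proof.
rewrite !ffunE !sum_Cs4 !(big_mkcond (fun j => cs4_mul _ j == _)) !sum_Cs4.
by rewrite /cs4_mul /= !inord_Cs4 /=; do ![split]; ring.
Qed.

Definition basis (q : Cs4) : ZQ := [ffun k => (k == q)%:R].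

Lemma ZQ_mul_basis i j : ZQ_mul (basis i) (basis j) = basis (cs4_mul i j).
Proof.
apply/ffunP => q; rewrite ffunE (bigD1 i) //= [X in _ + X]big1 ?addr0.
  rewrite big_mkcond (bigD1 j) //= [X in _ + X]big1 ?addr0.
    by rewrite !ffunE !eqxx mul1r eq_sym; case: eqP.
  by move=> j' ne_j'j; rewrite !ffunE (negPf ne_j'j) mulr0 if_same.
by move=> i' ne_i'i; rewrite big1 // => j' _; rewrite ffunE (negPf ne_i'i) mul0r.
Qed.

Lemma ZQ_mul_basis_right (w : ZQ) k : k != qz -> ZQ_mul w (basis k) = w.
Proof.
by case: (Cs4P k) => -> // _; apply: ZQ_eq; rewrite !ZQ_mulE !ffunE /=; ring.
Qed.

Lemma right_unit_coord (e : ZQ) :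
  (forall v, ZQ_mul v e = v) -> e qy = 1 - e qx /\ e qz = 0.
Proof.
move=> /(_ (basis qx)) /ffunP eR; move: (eR qx) (eR qy).
rewrite !ZQ_mulE !ffunE /= !mul1r !mul0r addr0 add0r => exy ez.
by split=> //; lia.
Qed.

Lemma morphD_raddfMz (U V : zmodType) (f : U -> V) :
  {morph f : u v / u + v} -> forall n : int, {morph f : u / u *~ n}.
Proof.
move=> fD n u; have f0 : f 0 = 0 by apply: (addrI (f 0)); rewrite -fD !addr0.
pose F : {additive U -> V} := HB.pack f (GRing.isNmodMorphism.Build U V f (f0, fD)).
exact: (raddfMz F).
Qed.

Lemma ZQ_basisE (u : ZQ) :
  u = basis qx *~ u qx + basis qy *~ u qy + basis qz *~ u qz.
Proof.
apply: ZQ_eq; rewrite !ffunE !ffunMzE !ffunE !mulrzz /=.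
all: by rewrite ?mul1r ?mul0r ?addr0 ?add0r.
Qed.

Lemma ZQ_additiveE (f : ZQ -> ZQ) : {morph f : u v / u + v} -> forall u k,
  f u k = u qx * f (basis qx) k + u qy * f (basis qy) k + u qz * f (basis qz) k.
Proof.
move=> fD u k; rewrite {1}(ZQ_basisE u) !fD !(morphD_raddfMz fD) !ffunE !ffunMzE.
by rewrite !mulrzz ![_ * u _]mulrC.
Qed.

Lemma ZQ_additive_eq (f g : ZQ -> ZQ) :
  {morph f : u v / u + v} -> {morph g : u v / u + v} ->
  (forall k, f (basis k) = g (basis k)) -> f =1 g.
Proof.
move=> fD gD fg u; apply/ffunP => k.
by rewrite (ZQ_additiveE fD) (ZQ_additiveE gD) !fg.
Qed.

Definition relabel (s : {perm Cs4}) (u : ZQ) : ZQ := [ffun k => u (s k)].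

Lemma relabelM (s t : {perm Cs4}) u :
  relabel (s * t)%g u = relabel s (relabel t u).
Proof. by apply/ffunP => k; rewrite !ffunE permM. Qed.

Lemma relabel1 u : relabel 1 u = u.
Proof. by apply/ffunP => k; rewrite ffunE perm1. Qed.

Lemma relabel_basis (s : {perm Cs4}) q : relabel s (basis q) = basis ((s^-1)%g q).
Proof. by apply/ffunP => k; rewrite !ffunE (canF_eq (permK s)). Qed.

Lemma relabel_aut (s : {perm Cs4}) :
  {morph s : i j / cs4_mul i j} -> is_ring_aut (relabel s).
Proof.
move=> sM; split.
- by move=> u v; apply/ffunP => k; rewrite !ffunE.
- by exists (relabel s^-1%g) => u; rewrite -relabelM ?mulgV ?mulVg relabel1.
move=> u v; apply/ffunP => q; rewrite !ffunE (reindex_inj (@perm_inj _ s)) /=.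
apply: eq_bigr => i _; rewrite (reindex_inj (@perm_inj _ s)) /=.
by apply: eq_big => [j|j _]; rewrite ?ffunE // -sM (inj_eq (@perm_inj _ s)).
Qed.

Definition swap_xy : {perm Cs4} := tperm qx qy.

Lemma swap_xyE : [/\ swap_xy qx = qy, swap_xy qy = qx & swap_xy qz = qz].
Proof. by rewrite /swap_xy tpermL tpermR tpermD. Qed.

Lemma swap_xy_morph : {morph swap_xy : i j / cs4_mul i j}.
Proof.
have [sx sy sz] := swap_xyE.
by move=> i j; case: (Cs4P i) => ->; case: (Cs4P j) => ->;
  rewrite ?sx ?sy ?sz /cs4_mul /= !inord_Cs4 ?sx ?sy ?sz.
Qed.

Lemma relabel_swap_basis :
  [/\ relabel swap_xy (basis qx) = basis qy,
      relabel swap_xy (basis qy) = basis qx &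
      relabel swap_xy (basis qz) = basis qz].
Proof. by have [sx sy sz] := swap_xyE; rewrite !relabel_basis tpermV sx sy sz. Qed.

Lemma mulz_eq1 (a b : int) : a * b = 1 -> a = 1 \/ a = -1.
Proof.
rewrite mulrC => /intUnitRing.unitzPl; rewrite qualifE.
by case/orP=> /eqP; [left | right].
Qed.

(* For f x = p x + (1 - p) y, f y = q x + (1 - q) y and r = f z = (r0, r1, r2),
   these are the z- and x-coordinates of r r = r and the x-coordinates of
   (f x) r = f y and (f y) r = f x. *)
Lemma image_z_arith (p q r0 r1 r2 : int) : p != q -> r2 != 0 ->
  r2 * (r0 + r1 + r2) = r2 -> r0 * (r0 + r1) + r1 * r2 = r0 ->
  p * (r0 + r1) + (1 - p) * r2 = q -> q * (r0 + r1) + (1 - q) * r2 = p ->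
  [/\ r0 = 0, r1 = 0, r2 = 1 & q = 1 - p].
Proof.
move=> npq nr2 hz hx hpq hqp.
have sum1 : r0 + r1 + r2 = 1 by apply: (mulfI nr2); rewrite mulr1.
have r2E : r2 = 1 - (r0 + r1) by rewrite -sum1; ring.
rewrite r2E in hx hpq hqp *.
have s0 : r0 + r1 = 0.
  have /eqP : (p - q) * (2 * (r0 + r1)) = 0 by lia.
  by rewrite mulf_eq0 subr_eq0 (negPf npq) mulf_eq0 /= => /eqP.
split; lia.
Qed.

Section RingAutomorphism.

Variable f : ZQ -> ZQ.
Hypothesis f_aut : is_ring_aut f.

Lemma aut_right_unit k : k != qz ->
  f (basis k) qy = 1 - f (basis k) qx /\ f (basis k) qz = 0.
Proof.
have [_ [g _ gK] fM] := f_aut.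
by move=> kz; apply: right_unit_coord => v; rewrite -[v]gK -fM ZQ_mul_basis_right.
Qed.

Lemma aut_basis_z : f (basis qz) = basis qz.
Proof.
have [fD [g fK gK] fM] := f_aut; have [mxz myz mzz] := cs4_mul_z.
set r := f (basis qz).
have [fxy fxz] := aut_right_unit (isT : qx != qz).
have [fyy fyz] := aut_right_unit (isT : qy != qz).
have /ffunP rr : ZQ_mul r r = r by rewrite -fM ZQ_mul_basis mzz.
have /ffunP xr : ZQ_mul (f (basis qx)) r = f (basis qy).
  by rewrite -fM ZQ_mul_basis mxz.
have /ffunP yr : ZQ_mul (f (basis qy)) r = f (basis qx).
  by rewrite -fM ZQ_mul_basis myz.
have npq : f (basis qx) qx != f (basis qy) qx.
  apply: contraTneq isT => epq.
  suff /(can_inj fK)/ffunP/(_ qx) : f (basis qx) = f (basis qy) by rewrite !ffunE.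
  by apply: ZQ_eq; rewrite ?fxy ?fyy ?fxz ?fyz ?epq.
have nrz : r qz != 0.
  have := congr1 (fun w : ZQ => w qz) (gK (basis qz)).
  rewrite /= (ZQ_additiveE fD) fxz fyz !mulr0 !add0r ffunE eqxx.
  by apply: contra_eq_neq => ->; rewrite mulr0.
move: (rr qz) (rr qx) (xr qx) (yr qx); rewrite !ZQ_mulE fxy fyy => hz hx hpq hqp.
have [r0 r1 r2 _] := image_z_arith npq nrz hz hx hpq hqp.
by apply: ZQ_eq; rewrite !ffunE.
Qed.

Lemma aut_basis_xy :
  (f (basis qx) = basis qx /\ f (basis qy) = basis qy) \/
  (f (basis qx) = basis qy /\ f (basis qy) = basis qx).
Proof.
have [fD [g _ gK] fM] := f_aut; have [mxz _ _] := cs4_mul_z.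
have [fxy fxz] := aut_right_unit (isT : qx != qz).
have /ffunP fy : f (basis qy) = ZQ_mul (f (basis qx)) (basis qz).
  by rewrite -aut_basis_z -fM ZQ_mul_basis mxz.
have p01 : f (basis qx) qx = 1 \/ f (basis qx) qx = 0.
  have /ffunP fg := gK (basis qx); move: (fg qx) (fg qy).
  rewrite [f (g _) qx](ZQ_additiveE fD) [f (g _) qy](ZQ_additiveE fD) aut_basis_z.
  rewrite !fy !ZQ_mulE !ffunE /= fxy => ex ey.
  have /mulz_eq1 : (2 * f (basis qx) qx - 1) * (g (basis qx) qx - g (basis qx) qy) = 1.
    by lia.
  by case=> e; [left | right]; lia.
have [fyx fyy fyz] : [/\ f (basis qy) qx = 1 - f (basis qx) qx,
                         f (basis qy) qy = f (basis qx) qx & f (basis qy) qz = 0].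
  by rewrite !fy !ZQ_mulE !ffunE /= fxy fxz; split; ring.
by case: p01 => e; [left | right]; split; apply: ZQ_eq;
  rewrite ?ffunE ?fxy ?fxz ?fyx ?fyy ?fyz ?e.
Qed.

Lemma aut_classification : f =1 id \/ f =1 relabel swap_xy.
Proof.
have [fD _ _] := f_aut; have [sD _ _] := relabel_aut swap_xy_morph.
have [sx sy sz] := relabel_swap_basis.
case: aut_basis_xy => -[fx fy]; [left | right]; apply: ZQ_additive_eq => // k;
  by case: (Cs4P k) => ->; rewrite ?sx ?sy ?sz ?aut_basis_z.
Qed.

End RingAutomorphism.

Theorem theorem6p2 :
  exists phi : 'Z_2 -> (ZQ -> ZQ),
    [/\ (forall a, is_ring_aut (phi a)),
        (forall a b, phi (a + b) =1 phi a \o phi b),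
        (forall a b, phi a =1 phi b -> a = b) &
        (forall f, is_ring_aut f -> exists a, phi a =1 f)].
Proof.
have swap2 : (swap_xy ^+ 2 = 1)%g by rewrite expgS expg1 tperm2.
have swap_neq1 : relabel swap_xy (basis qx) <> relabel 1 (basis qx).
  have [-> _ _] := relabel_swap_basis.
  by rewrite relabel1 => /ffunP/(_ qx); rewrite !ffunE.
have phi_inj (a b : 'Z_2) :
    relabel (swap_xy ^+ a) =1 relabel (swap_xy ^+ b) -> a = b.
  case: a b => [[|[|//]] ?] [[|[|//]] ?] /(_ (basis qx)) e; apply: val_inj => //=;
    by case: swap_neq1; first [exact: e | exact: esym e].
exists (fun a => relabel (swap_xy ^+ a)); split => //.
- move=> [[|[|//]] ?]; apply: relabel_aut => /=.
    by rewrite expg0 => i j; rewrite !perm1.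
  by rewrite expg1; apply: swap_xy_morph.
- by move=> a b u /=; rewrite -relabelM -expgD (expg_mod _ swap2).
- move=> f /aut_classification [] fE; [exists 0 | exists 1] => u;
    by rewrite fE ?expg0 ?expg1 ?relabel1.
Qed.
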